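(* Let $s\in\mathbb{N}$, let $A=(a_{ij})\in\mathbb{R}^{s\times s}$ be weakly positive definite, let $\mu\in\{1,2\}$ and $h_t>0$. Define $\mathcal{A}:\mathbf{V}\to\mathbf{V}^*$ by $$\langle \mathcal{A}\mathbf{u},\mathbf{v}\rangle=\sum_{i=1}^s\langle u_i,v_i\rangle_{L^2}+h_t^{\mu}\sum_{i=1}^s\sum_{j=1}^s a_{ij}\langle u_j,v_i\rangle_{H_0^1},\qquad \mathbf{u},\mathbf{v}\in\mathbf{V},$$ i.e. $\mathcal{A}=\mathbb{I}^{s\times s}\otimes\mathcal{I}+h_t^{\mu}A\otimes\mathcal{K}$ in weak form. Then $\mathcal{A}$ is an isomorphism from $\mathbf{V}$ onto $\mathbf{V}^*$, and there are finite constants $c_1,c_2$, depending only on $A$ and $s$ (in particular independent of $h_t$), such that $$\|\mathcal{A}\|_{\mathcal{L}(\mathbf{V},\mathbf{V}^* )}\le c_1,\qquad \|\mathcal{A}^{-1}\|_{\mathcal{L}(\mathbf{V}^*,\mathbf{V})}\le c_2.$$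
   Context: A real matrix $A\in\mathbb{R}^{s\times s}$ is called weakly positive definite if there exists a symmetric positive definite matrix $C\in\mathbb{R}^{s\times s}$ such that $CA$ is positive definite, i.e. $x^TCAx>0$ for all nonzero $x\in\mathbb{R}^s$. Let $\Omega\subset\mathbb{R}^d$ be a bounded polygonal domain whose boundary is partitioned into disjoint parts $\partial\Omega_N,\partial\Omega_D$. Let $\alpha,\beta\in L^\infty(\Omega)$ with $\alpha>0$ (bounded below by a positive constant) and $\beta\ge 0$ on $\Omega$. Define $\langle u,v\rangle_{L^2}=\int_\Omega uv$ and $\langle u,v\rangle_{H_0^1}=\int_\Omega(\alpha\nabla u\cdot\nabla v+\beta uv)$ (possibly only a semi-inner product), with $\|u\|_{H_0^1}^2=\langle u,u\rangle_{H_0^1}$; this is the weak form of $\mathcal{K}u=-\nabla\cdot(\alpha\nabla u)+\beta u$. Let $V$ be the space of $H^1(\Omega)$ functions vanishing on $\partial\Omega_D$, with inner product $\langle u,v\rangle_V=\langle u,v\rangle_{L^2}+h_t^{\mu}\langle u,v\rangle_{H_0^1}$ and norm $\|u\|_V^2=\|u\|_{L^2}^2+h_t^{\mu}\|u\|_{H_0^1}^2$. Let $\mathbf{V}=V^s$ with $\langle\mathbf{u},\mathbf{v}\rangle_{\mathbf{V}}=\sum_{i=1}^s\langle u_i,v_i\rangle_V$ and induced norm, and let $\mathbf{V}^*$ be its dual with the dual norm. *)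

From HB Require Import structures.
From mathcomp Require Import all_boot all_order all_algebra.
From mathcomp Require Import reals.
Set Implicit Arguments. Unset Strict Implicit. Unset Printing Implicit Defensive.
Import Order.TTheory GRing.Theory Num.Theory.
Local Open Scope ring_scope.

Section Defs.
Variable R : realType.

Definition weakly_pos_def (s : nat) (A : 'M[R]_s) : Prop :=
  exists C : 'M[R]_s,
    C^T = C /\
    (forall x : 'cV[R]_s, x != 0 -> 0 < (x^T *m C *m x) 0 0) /\
    (forall x : 'cV[R]_s, x != 0 -> 0 < (x^T *m (C *m A) *m x) 0 0).

Definition sym_bilinear (V : lmodType R) (b : V -> V -> R) : Prop :=
  (forall u v, b u v = b v u) /\
  (forall (a : R) (u w v : V), b (a *: u + w) v = a * b u v + b w v).

Definition Vnorm (V : lmodType R) (l2 h1 : V -> V -> R) (ht : R) (mu : nat)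
  (u : V) : R := Num.sqrt (l2 u u + ht ^+ mu * h1 u u).

(* The abstract setting of the paper: V is a real vector space carrying the
   L^2 inner product l2 and the (semi-)inner product h1 = <.,.>_{H_0^1}
   (a(x) grad u . grad v + beta u v), and V is complete for ||.||_V
   (V = {u in H^1(Omega) : u = 0 on dOmega_D} is a Hilbert space). *)
Definition hilbert_setting (V : lmodType R) (l2 h1 : V -> V -> R)
  (ht : R) (mu : nat) : Prop :=
  [/\ sym_bilinear l2, sym_bilinear h1,
      (forall u : V, u != 0 -> 0 < l2 u u),
      (forall u : V, 0 <= h1 u u) &
      (forall un : nat -> V,
         (forall e : R, 0 < e -> exists N : nat, forall m n : nat,
            (N <= m)%N -> (N <= n)%N -> Vnorm l2 h1 ht mu (un m - un n) < e) ->
         exists v : V, forall e : R, 0 < e -> exists N : nat, forall n : nat,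
            (N <= n)%N -> Vnorm l2 h1 ht mu (un n - v) < e)].

Definition VSnorm (V : lmodType R) (s : nat) (l2 h1 : V -> V -> R) (ht : R)
  (mu : nat) (u : 'I_s -> V) : R :=
  Num.sqrt (\sum_(i < s) Vnorm l2 h1 ht mu (u i) ^+ 2).

Definition opA (V : lmodType R) (s : nat) (A : 'M[R]_s) (l2 h1 : V -> V -> R)
  (ht : R) (mu : nat) (u v : 'I_s -> V) : R :=
  \sum_(i < s) l2 (u i) (v i)
  + ht ^+ mu * \sum_(i < s) \sum_(j < s) A i j * h1 (u j) (v i).

Definition in_dual (V : lmodType R) (s : nat) (l2 h1 : V -> V -> R) (ht : R)
  (mu : nat) (f : ('I_s -> V) -> R) : Prop :=
  (forall (a : R) (u w : 'I_s -> V),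
      f (fun i => a *: u i + w i) = a * f u + f w) /\
  (exists M : R, forall v, `|f v| <= M * VSnorm l2 h1 ht mu v).

End Defs.

(* Take C from the weak positive definiteness of A and test with v = C u:
   <A u, C u> = sum_ik c_ik <u_i, u_k>_L2 + ht^mu sum_ik (CA)_ki <u_i, u_k>_H01.
   A positive definite matrix P dominates lam I uniformly in the inner product it
   is tensored with (induction on the size, completing the square / Schur
   complement), so u |-> <A u, C .> is coercive on V^s with a constant depending
   on A only.  Lax-Milgram then gives surjectivity (C is invertible), and
   coercivity together with |C w| <= sqrt cC |w| gives |u| <= sqrt cC / lam |A u|.
   Lax-Milgram itself is derived from the Riesz representation (minimising the
   energy |v|^2 - 2 f v) and Banach's fixed point theorem. *)

From HB Require Import structures.
From mathcomp Require Import all_boot all_order all_algebra.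
From mathcomp Require Import boolp classical_sets functions reals.
From mathcomp Require Import ring lra.
Set Implicit Arguments. Unset Strict Implicit. Unset Printing Implicit Defensive.
Import Order.TTheory GRing.Theory Num.Theory.
Local Open Scope ring_scope.

Lemma quadratic_ge0_discr_le (R : realFieldType) (a b c : R) : 0 <= a ->
  (forall t, 0 <= a * t ^+ 2 - 2 * b * t + c) -> b ^+ 2 <= a * c.
Proof.
move=> a_ge0 q_ge0; have [a_gt0 | a_le0] := ltP 0 a; last first.
  have a0 : a = 0 by apply/le_anti/andP.
  have [b0 | b_neq0] := eqVneq b 0; first by rewrite a0 b0 expr0n mul0r.
  have := q_ge0 ((c + 1) / (2 * b)).
  suff -> : a * ((c + 1) / (2 * b)) ^+ 2 - 2 * b * ((c + 1) / (2 * b)) + c = -1.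
    by rewrite ler0N1.
  by rewrite a0; field.
have := q_ge0 (b / a); rewrite -(ler_pM2l a_gt0) mulr0.
have -> : a * (a * (b / a) ^+ 2 - 2 * b * (b / a) + c) = a * c - b ^+ 2.
  by field; rewrite gt_eqF.
by rewrite subr_ge0.
Qed.

Lemma bernoulli_le (R : realDomainType) (h : R) n :
  0 <= h -> 1 + n%:R * h <= (1 + h) ^+ n.
Proof.
move=> h_ge0; elim: n => [|n IH]; first by rewrite mul0r addr0 expr0.
have nhh_ge0 : 0 <= n%:R * h * h by rewrite !mulr_ge0.
by rewrite exprSr -addn1 natrD; nra.
Qed.

Lemma expr_lt_eventually (R : archiFieldType) (r e : R) : 0 <= r -> r < 1 ->
  0 < e -> exists N, forall n, (N <= n)%N -> r ^+ n < e.
Proof.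
move=> r_ge0 r_lt1 e_gt0; have [-> | r_neq0] := eqVneq r 0.
  by exists 1%N => -[|n] // _; rewrite expr0n.
have r_gt0 : 0 < r by rewrite lt_def r_neq0.
pose h := r^-1 - 1; have h_gt0 : 0 < h by rewrite subr_gt0 invf_gt1.
have eh_ge0 : 0 <= e^-1 / h by rewrite divr_ge0 // ltW ?invr_gt0.
exists (Num.Def.archi_bound (e^-1 / h)) => n Nn.
rewrite -[r]invrK exprVn invf_plt ?posrE ?exprn_gt0 ?invr_gt0 //.
have -> : r^-1 = 1 + h by rewrite /h addrC subrK.
apply: (lt_le_trans _ (bernoulli_le n (ltW h_gt0))).
have : e^-1 / h < n%:R.
  by apply: lt_le_trans (archi_boundP eh_ge0) _; rewrite ler_nat.
rewrite ltr_pdivrMr //; lra.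
Qed.

Section SymBilinear.
Variables (R : realType) (W : lmodType R) (g : W -> W -> R).
Hypothesis gB : sym_bilinear g.

Lemma bilC u v : g u v = g v u. Proof. by case: gB. Qed.

Lemma bil0l v : g 0 v = 0.
Proof.
by case: gB => _ gL; have := gL (-1) 0 0 v; rewrite scaler0 addr0 mulN1r addNr.
Qed.

Lemma bilDl u w v : g (u + w) v = g u v + g w v.
Proof. by case: gB => _ gL; have := gL 1 u w v; rewrite scale1r mul1r. Qed.

Lemma bilZl a u v : g (a *: u) v = a * g u v.
Proof. by case: gB => _ gL; rewrite -[a *: u]addr0 gL bil0l addr0. Qed.

Lemma bilNl u v : g (- u) v = - g u v.
Proof. by rewrite -scaleN1r bilZl mulN1r. Qed.

Lemma bilBl u w v : g (u - w) v = g u v - g w v.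
Proof. by rewrite bilDl bilNl. Qed.

Lemma bilDr u w v : g v (u + w) = g v u + g v w.
Proof. by rewrite bilC bilDl !(bilC v). Qed.

Lemma bilZr a u v : g v (a *: u) = a * g v u.
Proof. by rewrite bilC bilZl bilC. Qed.

Lemma bilNr u v : g v (- u) = - g v u.
Proof. by rewrite bilC bilNl bilC. Qed.

Lemma bil_suml (I : Type) (r : seq I) (P : pred I) (F : I -> W) v :
  g (\sum_(i <- r | P i) F i) v = \sum_(i <- r | P i) g (F i) v.
Proof. by elim/big_rec2: _ => [|i y x _ <-]; rewrite ?bil0l ?bilDl. Qed.

Lemma bil_sumr (I : Type) (r : seq I) (P : pred I) (F : I -> W) v :
  g v (\sum_(i <- r | P i) F i) = \sum_(i <- r | P i) g v (F i).
Proof. by rewrite bilC bil_suml; apply: eq_bigr => i _; rewrite bilC. Qed.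

Lemma bilDD x y : g (x + y) (x + y) = g x x + 2 * g x y + g y y.
Proof. by rewrite !(bilDl, bilDr) (bilC y x); ring. Qed.

Lemma bilBB x y : g (x - y) (x - y) = g x x - 2 * g x y + g y y.
Proof. by rewrite bilDD bilNl bilNr bilNr opprK; ring. Qed.

Definition psd_form := forall x, 0 <= g x x.

Hypothesis gP : psd_form.

Lemma bilDD_le x y : g (x + y) (x + y) <= 2 * g x x + 2 * g y y.
Proof. by have := gP (x - y); rewrite bilBB bilDD; lra. Qed.

Lemma bil_CauchySchwarz x y : g x y ^+ 2 <= g y y * g x x.
Proof.
apply: quadratic_ge0_discr_le (gP y) _ => t.
by have := gP (x - t *: y); rewrite bilBB bilZl !bilZr; lra.
Qed.

Definition bnorm x := Num.sqrt (g x x).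

Lemma bnorm_ge0 x : 0 <= bnorm x. Proof. exact: sqrtr_ge0. Qed.

Lemma sqr_bnorm x : bnorm x ^+ 2 = g x x. Proof. exact: sqr_sqrtr. Qed.

Lemma normr_bil_le x y : `|g x y| <= bnorm x * bnorm y.
Proof.
rewrite /bnorm -sqrtrM // -sqrtr_sqr ler_sqrt ?mulr_ge0 //.
by rewrite mulrC bil_CauchySchwarz.
Qed.

Lemma bnormD x y : bnorm (x + y) <= bnorm x + bnorm y.
Proof.
rewrite -(ler_pXn2r (_ : 0 < 2)%N) ?nnegrE ?addr_ge0 ?bnorm_ge0 //.
rewrite sqr_bnorm bilDD sqrrD !sqr_bnorm lerD2r lerD2l mulr_natl lerMn2r /=.
exact: le_trans (ler_norm _) (normr_bil_le x y).
Qed.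

Lemma bnormN x : bnorm (- x) = bnorm x.
Proof. by rewrite /bnorm bilNl bilNr opprK. Qed.

Lemma bnormB x y : bnorm (x - y) = bnorm (y - x).
Proof. by rewrite -bnormN opprB. Qed.

Lemma bnorm_lt x e : 0 < e -> g x x < e ^+ 2 -> bnorm x < e.
Proof.
move=> e_gt0 gxx.
by rewrite -(ltr_pXn2r (_ : 0 < 2)%N) ?nnegrE ?bnorm_ge0 ?ltW // sqr_bnorm.
Qed.

Lemma bnorm_eq0 x : (forall y, g y y = 0 -> y = 0) -> bnorm x = 0 -> x = 0.
Proof.
by move=> g_def /eqP; rewrite sqrtr_eq0 => gxx; apply/g_def/le_anti; rewrite gxx gP.
Qed.

Definition bil_cauchy (un : nat -> W) := forall e, 0 < e ->
  exists N, forall m n, (N <= m)%N -> (N <= n)%N -> bnorm (un m - un n) < e.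

Definition bil_cvg_to (un : nat -> W) v := forall e, 0 < e ->
  exists N, forall n, (N <= n)%N -> bnorm (un n - v) < e.

Definition bil_complete := forall un, bil_cauchy un -> exists v, bil_cvg_to un v.

End SymBilinear.

Definition linear_form (R : realType) (W : lmodType R) (f : W -> R) :=
  forall a u w, f (a *: u + w) = a * f u + f w.

Section LinearForm.
Variables (R : realType) (W : lmodType R) (f : W -> R).
Hypothesis fL : linear_form f.

Lemma linear_form0 : f 0 = 0.
Proof. by have := fL (-1) 0 0; rewrite scaler0 addr0 mulN1r addNr. Qed.

Lemma linear_formD u w : f (u + w) = f u + f w.
Proof. by have := fL 1 u w; rewrite scale1r mul1r. Qed.

Lemma linear_formZ a u : f (a *: u) = a * f u.
Proof. by rewrite -[a *: u]addr0 fL linear_form0 addr0. Qed.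

End LinearForm.

Section Riesz.
Variables (R : realType) (W : lmodType R) (g : W -> W -> R) (f : W -> R) (K : R).
Hypotheses (gB : sym_bilinear g) (gP : psd_form g) (g_complete : bil_complete g).
Hypotheses (fL : linear_form f) (fK : forall v, `|f v| <= K * bnorm g v).

(* The representative minimises the energy; minimising sequences are Cauchy by
   the parallelogram law. *)
Let energy v := g v v - 2 * f v.

Lemma energy_lb v : - K ^+ 2 <= energy v.
Proof.
have := fK v; have := ler_norm (f v); have := sqr_ge0 (bnorm g v - K).
by rewrite /energy -(sqr_bnorm gP); nra.
Qed.

Lemma energyD u t : energy (u + t) = energy u + 2 * (g u t - f t) + g t t.
Proof. by rewrite /energy (bilDD gB) (linear_formD fL); ring. Qed.

Lemma energy_midpoint a b : g (a - b) (a - b) =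
  2 * energy a + 2 * energy b - 4 * energy (2^-1 *: (a + b)).
Proof.
rewrite /energy (linear_formZ fL) (linear_formD fL) (bilZl gB) (bilZr gB) (bilBB gB) (bilDD gB).
by field.
Qed.

Lemma energy_argmin_repr u : (forall w, energy u <= energy w) ->
  forall v, g u v = f v.
Proof.
move=> u_min v; apply/eqP; rewrite -subr_eq0 -sqrf_eq0 eq_le sqr_ge0 andbT.
rewrite -(mulr0 (g v v)) -[_ - _]opprB sqrrN.
apply: quadratic_ge0_discr_le (gP v) _ => t.
have := u_min (u + t *: v); rewrite energyD (linear_formZ fL) (bilZr gB) (bilZl gB) (bilZr gB).
by lra.
Qed.

Let m := inf (range energy).

Let energy_has_inf : has_inf (range energy).
Proof.
split; first by exists (energy 0), 0.
by exists (- K ^+ 2) => _ [v _ <-]; apply: energy_lb.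
Qed.

Let inf_le_energy v : m <= energy v.
Proof. by apply: (ge_inf (proj2 energy_has_inf)); exists v. Qed.

Let half_pow_lt_eventually (e : R) : 0 < e ->
  exists N, forall n, (N <= n)%N -> 2^-1 ^+ n < e.
Proof. by apply: expr_lt_eventually; rewrite ?invr_ge0 ?invf_lt1 ?ler0n ?(ltr1n R). Qed.

Section MinimizingSequence.
Variable vs : nat -> W.
Hypothesis vs_min : forall k, energy (vs k) < m + 2^-1 ^+ k.

Lemma minimizing_cauchy : bil_cauchy g vs.
Proof.
move=> e e_gt0.
have e24_gt0 : 0 < e ^+ 2 / 4 by rewrite divr_gt0 ?exprn_gt0.
have [N HN] := half_pow_lt_eventually e24_gt0.
exists N => a b Na Nb; apply: bnorm_lt => //; rewrite energy_midpoint.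
have := inf_le_energy (2^-1 *: (vs a + vs b)).
have := vs_min a; have := vs_min b; have := HN a Na; have := HN b Nb; lra.
Qed.

Lemma minimizing_lim_argmin u : bil_cvg_to g vs u -> forall w, energy u <= energy w.
Proof.
move=> vs_u w; apply: le_trans (inf_le_energy w); apply/ler_addgt0Pr => e e_gt0.
pose L := 2 * (bnorm g u + `|K|) + 1.
have L_gt0 : 0 < L by rewrite /L; have := bnorm_ge0 g u; have := normr_ge0 K; lra.
have e2_gt0 : 0 < e / 2 by lra.
have [N1 HN1] := vs_u _ (divr_gt0 e2_gt0 L_gt0).
have [N2 HN2] := half_pow_lt_eventually e2_gt0.
pose n := maxn N1 N2; pose t := vs n - u.
have t_small : bnorm g t * L < e / 2 by rewrite -ltr_pdivlMr // HN1 ?leq_maxl.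
have vs_n : vs n = u + t by rewrite /t addrC subrK.
have := HN2 n (leq_maxr _ _); have := vs_min n; rewrite vs_n energyD.
have Kt : K * bnorm g t <= `|K| * bnorm g t by rewrite ler_wpM2r ?bnorm_ge0 ?ler_norm.
have := normr_bil_le gB gP u t; have := ler_norm (- g u t); have := fK t.
have := ler_norm (f t); have := gP t; have := bnorm_ge0 g t.
by rewrite normrN /L in t_small *; lra.
Qed.

End MinimizingSequence.

Lemma riesz_representation : exists u, forall v, g u v = f v.
Proof.
have seq_ex k : exists v, energy v < m + 2^-1 ^+ k.
  have half_pow_gt0 : 0 < 2^-1 ^+ k :> R by rewrite exprn_gt0 ?invr_gt0.
  have [_ [v _ <-] ?] := inf_adherent half_pow_gt0 energy_has_inf.
  by exists v.
have [vs vs_min] := choice seq_ex.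
have [u vs_u] := g_complete (minimizing_cauchy vs_min).
by exists u; apply/energy_argmin_repr/(minimizing_lim_argmin vs_min).
Qed.

End Riesz.

Section ContractionFixpoint.
Variables (R : realType) (W : lmodType R) (g : W -> W -> R).
Hypotheses (gB : sym_bilinear g) (gP : psd_form g) (g_complete : bil_complete g).
Hypothesis g_definite : forall x, g x x = 0 -> x = 0.
Variables (Phi : W -> W) (r : R).
Hypotheses (r_ge0 : 0 <= r) (r_lt1 : r < 1).
Hypothesis Phi_contr : forall w w', bnorm g (Phi w - Phi w') <= r * bnorm g (w - w').

Let ws k := iter k Phi 0.
Let D := bnorm g (ws 1 - ws 0).

Lemma contraction_iter_step k : bnorm g (ws k.+1 - ws k) <= r ^+ k * D.
Proof.
elim: k => [|k IH]; first by rewrite expr0 mul1r.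
by apply: le_trans (Phi_contr _ _) _; rewrite exprS -mulrA ler_wpM2l.
Qed.

Lemma contraction_iter_tail n k :
  (1 - r) * bnorm g (ws (n + k) - ws n) <= r ^+ n * D * (1 - r ^+ k).
Proof.
elim: k => [|k IH]; first by rewrite addn0 subrr /bnorm (bil0l gB) sqrtr0 expr0 subrr !mulr0.
have split_k : ws (n + k.+1) - ws n = (ws (n + k).+1 - ws (n + k)) + (ws (n + k) - ws n).
  by rewrite addnS addrA subrK.
have r1_ge0 : 0 <= 1 - r by rewrite subr_ge0 ltW.
have step := ler_wpM2l r1_ge0 (contraction_iter_step (n + k)).
have tri := ler_wpM2l r1_ge0 (bnormD gB gP (ws (n + k).+1 - ws (n + k)) (ws (n + k) - ws n)).
rewrite split_k exprS; rewrite exprD in step; lra.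
Qed.

Lemma contraction_iter_dist n m : (n <= m)%N ->
  (1 - r) * bnorm g (ws m - ws n) <= r ^+ n * D.
Proof.
move=> nm; rewrite -(subnKC nm); apply: le_trans (contraction_iter_tail _ _) _.
have := exprn_ge0 (m - n) r_ge0; have := mulr_ge0 (exprn_ge0 n r_ge0) (bnorm_ge0 g (ws 1 - ws 0)).
rewrite -/D; nra.
Qed.

Lemma contraction_iter_cauchy : bil_cauchy g ws.
Proof.
move=> e e_gt0; have D_ge0 : 0 <= D := bnorm_ge0 g _.
have eps_gt0 : 0 < (1 - r) * e / (2 * D + 1) by rewrite !divr_gt0 ?mulr_gt0 ?subr_gt0 //; lra.
have [N HN] := expr_lt_eventually r_ge0 r_lt1 eps_gt0.
exists N => m n Nm Nn.
have rN : r ^+ N * (2 * D + 1) < (1 - r) * e by rewrite -ltr_pdivlMr ?HN //; lra.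
have r1_gt0 : 0 < 1 - r by rewrite subr_gt0.
have tri := bnormD gB gP (ws m - ws N) (ws N - ws n).
rewrite addrA subrK (bnormB gB (ws N)) in tri.
rewrite -(ltr_pM2l r1_gt0); apply: le_lt_trans (ler_wpM2l (ltW r1_gt0) tri) _.
have := contraction_iter_dist Nm; have := contraction_iter_dist Nn.
have := exprn_ge0 N r_ge0; nra.
Qed.

Lemma contraction_fixpoint : exists w, Phi w = w.
Proof.
have [w ws_w] := g_complete contraction_iter_cauchy; exists w.
apply/eqP; rewrite -subr_eq0; apply/eqP/(bnorm_eq0 gP g_definite)/le_anti.
rewrite bnorm_ge0 andbT; apply/ler_addgt0Pr => e e_gt0; rewrite add0r.
have [N HN] := ws_w (e / 2) (divr_gt0 e_gt0 (ltr0Sn _ 1)).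
have split_N : Phi w - w = (Phi w - Phi (ws N)) + (ws N.+1 - w) by rewrite addrA subrK.
rewrite split_N; apply: le_trans (bnormD gB gP _ _) _.
have contr : bnorm g (Phi w - Phi (ws N)) <= bnorm g (ws N - w).
  apply: le_trans (Phi_contr w (ws N)) _; rewrite (bnormB gB w).
  by rewrite ler_piMl ?bnorm_ge0 ?ltW.
have := HN N (leqnn N); have := HN N.+1 (leqnSn N); move: contr; rewrite /ws /=; lra.
Qed.

End ContractionFixpoint.

Section LaxMilgram.
Variables (R : realType) (W : lmodType R) (g : W -> W -> R).
Hypotheses (gB : sym_bilinear g) (gP : psd_form g) (g_complete : bil_complete g).
Hypothesis g_definite : forall x, g x x = 0 -> x = 0.
Variables (b : W -> W -> R) (f : W -> R) (alpha M K : R).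
Hypothesis bL : forall a u w v, b (a *: u + w) v = a * b u v + b w v.
Hypothesis bR : forall u, linear_form (b u).
Hypothesis b_bounded : forall u v, `|b u v| <= M * bnorm g u * bnorm g v.
Hypotheses (alpha_gt0 : 0 < alpha) (b_coercive : forall u, alpha * g u u <= b u u).
Hypotheses (fL : linear_form f) (fK : forall v, `|f v| <= K * bnorm g v).

(* Enlarging M to M' makes the contraction factor 1 - alpha^2 / M'^2 nonnegative. *)
Local Notation M' := (Num.max M alpha).
Local Notation rho := (alpha / M' ^+ 2).

Let alpha_le_M' : alpha <= M'. Proof. by rewrite le_max lexx orbT. Qed.
Let M'_gt0 : 0 < M'. Proof. exact: lt_le_trans alpha_le_M'. Qed.
Let rho_gt0 : 0 < rho. Proof. by rewrite divr_gt0 ?exprn_gt0. Qed.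

Let b_bounded' u v : `|b u v| <= M' * bnorm g u * bnorm g v.
Proof.
apply: le_trans (b_bounded u v) _; rewrite -!mulrA ler_wpM2r ?le_max ?lexx //.
by rewrite mulr_ge0 ?bnorm_ge0.
Qed.

(* Phi w is the Riesz representative of g w - rho (b w - f); Phi is a contraction
   whose fixed point solves b u = f. *)
Lemma lax_milgram_step w : exists y, forall v, g y v = g w v - rho * (b w v - f v).
Proof.
apply: (riesz_representation gB gP g_complete (K := bnorm g w + rho * M' * bnorm g w + rho * K)).
  by move=> a u v; rewrite (bilDr gB) (bilZr gB) bR fL; ring.
move=> v; apply: le_trans (ler_normB _ _) _; rewrite normrM (gtr0_norm rho_gt0).
have -> : (bnorm g w + rho * M' * bnorm g w + rho * K) * bnorm g v =
  bnorm g w * bnorm g v + rho * (M' * bnorm g w * bnorm g v + K * bnorm g v) by ring.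
apply: lerD; first exact: normr_bil_le.
rewrite ler_pM2l //; apply: le_trans (ler_normB _ _) _.
exact: lerD.
Qed.

Let bBl u w v : b (u - w) v = b u v - b w v.
Proof. by rewrite addrC -scaleN1r bL mulN1r addrC. Qed.

Lemma lax_milgram_contraction Phi :
  (forall w v, g (Phi w) v = g w v - rho * (b w v - f v)) ->
  forall w w', g (Phi w - Phi w') (Phi w - Phi w') <=
    (1 - alpha ^+ 2 / M' ^+ 2) * g (w - w') (w - w').
Proof.
move=> PhiE w w'; pose d := w - w'; pose t := d - (Phi w - Phi w').
have gtE v : g t v = rho * b d v.
  by rewrite /t /d !(bilBl gB) !PhiE bBl; ring.
have t_le : bnorm g t <= rho * M' * bnorm g d.
  have tt_le : bnorm g t ^+ 2 <= rho * M' * bnorm g d * bnorm g t.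
    rewrite (sqr_bnorm gP) gtE.
    have := ler_wpM2l (ltW rho_gt0) (le_trans (ler_norm _) (b_bounded' d t)); lra.
  have := bnorm_ge0 g t; have := mulr_ge0 (mulr_ge0 (ltW rho_gt0) (ltW M'_gt0)) (bnorm_ge0 g d).
  nra.
have -> : Phi w - Phi w' = d - t by rewrite /t opprB addrCA subrr addr0.
rewrite (bilBB gB) (bilC gB d t) gtE -!(sqr_bnorm gP).
have := b_coercive d; rewrite -(sqr_bnorm gP) => coer.
have tt_le : bnorm g t ^+ 2 <= (rho * M') ^+ 2 * bnorm g d ^+ 2.
  rewrite -exprMn ler_pXn2r ?nnegrE ?bnorm_ge0 //.
  by apply: mulr_ge0; [apply: mulr_ge0; apply: ltW | apply: bnorm_ge0].
have -> : 1 - alpha ^+ 2 / M' ^+ 2 = 1 - 2 * rho * alpha + (rho * M') ^+ 2.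
  by field; rewrite gt_eqF.
have := ler_wpM2l (ltW rho_gt0) coer; nra.
Qed.

Lemma lax_milgram : exists u, forall v, b u v = f v.
Proof.
have [Phi PhiE] := choice lax_milgram_step.
pose q := 1 - alpha ^+ 2 / M' ^+ 2.
have q_ge0 : 0 <= q.
  rewrite subr_ge0 ler_pdivrMr ?exprn_gt0 // mul1r.
  by rewrite ler_pXn2r ?nnegrE ?(ltW alpha_gt0) ?(ltW M'_gt0).
have q_lt1 : q < 1 by rewrite /q ltrBlDr ltrDl divr_gt0 ?exprn_gt0.
have Phi_contr w w' : bnorm g (Phi w - Phi w') <= Num.sqrt q * bnorm g (w - w').
  by rewrite /bnorm -sqrtrM // ler_sqrt ?mulr_ge0 //; apply: lax_milgram_contraction.
have sqrt_q_lt1 : Num.sqrt q < 1 by rewrite -sqrtr1 ltr_sqrt.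
have [w Phi_w] := contraction_fixpoint gB gP g_complete g_definite (sqrtr_ge0 q)
  sqrt_q_lt1 Phi_contr.
exists w => v; have := PhiE w v; rewrite Phi_w => /eqP.
by rewrite -subr_eq0 opprB addrC subrK mulf_eq0 gt_eqF //= subr_eq0 => /eqP.
Qed.

End LaxMilgram.

Section TensorForms.
Variable R : realType.

Definition sum_form n (W : lmodType R) (g : W -> W -> R) (u v : 'I_n -> W) : R :=
  \sum_i g (u i) (v i).

Definition qform n (P : 'M[R]_n) (W : lmodType R) (g : W -> W -> R) (u : 'I_n -> W) : R :=
  \sum_i \sum_k P i k * g (u i) (u k).

Definition mxact n (P : 'M[R]_n) (W : lmodType R) (u : 'I_n -> W) : 'I_n -> W :=
  fun i => \sum_k P i k *: u k.

Definition posdef n (P : 'M[R]_n) :=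
  forall x : 'cV[R]_n, x != 0 -> 0 < (x^T *m P *m x) 0 0.

Lemma sum_form_ge0 n (W : lmodType R) (g : W -> W -> R) (u : 'I_n -> W) :
  psd_form g -> 0 <= sum_form g u u.
Proof. by move=> gP; apply: sumr_ge0 => i _; apply: gP. Qed.

Lemma lincomb_form_le n (c : 'I_n -> R) : exists K, 0 <= K /\
  forall (W : lmodType R) (g : W -> W -> R), sym_bilinear g -> psd_form g ->
  forall u : 'I_n -> W,
    g (\sum_k c k *: u k) (\sum_k c k *: u k) <= K * sum_form g u u.
Proof.
elim: n c => [|n IH] c.
  by exists 0; split=> // W g gB gP u; rewrite /sum_form !big_ord0 (bil0l gB) mul0r.
have [K [K_ge0 HK]] := IH (fun k => c (lift ord0 k)).
exists (2 * c ord0 ^+ 2 + 2 * K); split=> [|W g gB gP u]; first by nra.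
rewrite /sum_form !big_ord_recl.
have := bilDD_le gB gP (c ord0 *: u ord0) (\sum_(i < n) c (lift ord0 i) *: u (lift ord0 i)).
have := HK W g gB gP (fun k => u (lift ord0 k)).
have := sum_form_ge0 (fun k => u (lift ord0 k)) gP; have := gP (u ord0).
rewrite /sum_form (bilZl gB) (bilZr gB) /=; nra.
Qed.

Lemma mxact_form_le n (P : 'M[R]_n) : exists2 K, 0 <= K &
  forall (W : lmodType R) (g : W -> W -> R), sym_bilinear g -> psd_form g ->
  forall u : 'I_n -> W, sum_form g (mxact P u) (mxact P u) <= K * sum_form g u u.
Proof.
have [K HK] := choice (fun i => lincomb_form_le (P i)).
exists (\sum_i K i) => [|W g gB gP u]; first by apply: sumr_ge0 => i _; case: (HK i).
rewrite mulr_suml; apply: ler_sum => i _; case: (HK i) => _; exact.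
Qed.

Definition scalar_form (a b : R^o) : R := a * b.

Lemma scalar_form_sym_bilinear : sym_bilinear scalar_form.
Proof.
by split=> [u v | a u w v]; rewrite /scalar_form /= ?mulrDl ?mulrA // mulrC.
Qed.

Lemma mx_quadE n (P : 'M[R]_n) (x : 'cV[R]_n) :
  (x^T *m P *m x) 0 0 = qform P scalar_form (fun i => x i 0 : R^o).
Proof.
rewrite /qform /scalar_form !mxE.
under eq_bigr do rewrite !mxE big_distrl /=.
rewrite exchange_big /=; apply: eq_bigr => i _; apply: eq_bigr => k _.
by rewrite !mxE; ring.
Qed.

Lemma posdef_unitmx n (P : 'M[R]_n) : posdef P -> P \in unitmx.
Proof.
move=> P_pd; rewrite unitmxE unitfE; apply/negP => /det0P [v v_neq0 vP].
have := P_pd v^T; rewrite trmx_eq0 => /(_ v_neq0).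
by rewrite trmxK vP mul0mx mxE ltxx.
Qed.

Section Schur.
Variables (n : nat) (P : 'M[R]_n.+1).
Local Notation p := (P ord0 ord0).

Definition schur_vec (k : 'I_n) := (P ord0 (lift ord0 k) + P (lift ord0 k) ord0) / 2.

Definition schur := \matrix_(i, k)
  (P (lift ord0 i) (lift ord0 k) - schur_vec i * schur_vec k / p).

Local Notation b := schur_vec.

Lemma qform_schur (W : lmodType R) (g : W -> W -> R) (u : 'I_n.+1 -> W) :
  sym_bilinear g -> p != 0 ->
  qform P g u = p * g (u ord0 + p^-1 *: \sum_k b k *: u (lift ord0 k))
                      (u ord0 + p^-1 *: \sum_k b k *: u (lift ord0 k))
                + qform schur g (fun k => u (lift ord0 k)).
Proof.
move=> gB p_neq0; set u' := fun k => u (lift ord0 k); set z := \sum_k b k *: u' k.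
have u0z : g (u ord0) z = \sum_k b k * g (u ord0) (u' k).
  by rewrite (bil_sumr gB); apply: eq_bigr => k _; rewrite (bilZr gB).
have zz : g z z = \sum_i \sum_k b i * b k * g (u' i) (u' k).
  rewrite (bil_suml gB); apply: eq_bigr => i _; rewrite (bilZl gB) (bil_sumr gB) big_distrr.
  by apply: eq_bigr => k _; rewrite (bilZr gB) /=; ring.
have bE : \sum_k b k * g (u ord0) (u' k) =
    (\sum_k P ord0 (lift ord0 k) * g (u ord0) (u' k)
     + \sum_k P (lift ord0 k) ord0 * g (u' k) (u ord0)) / 2.
  rewrite -big_split big_distrl /=; apply: eq_bigr => k _.
  by rewrite /b (bilC gB (u' k)); field.
have schurE : qform schur g u' =
    \sum_i \sum_k P (lift ord0 i) (lift ord0 k) * g (u' i) (u' k)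
    - p^-1 * \sum_i \sum_k b i * b k * g (u' i) (u' k).
  rewrite /qform big_distrr -sumrB /=; apply: eq_bigr => i _.
  rewrite big_distrr -sumrB /=; apply: eq_bigr => k _.
  by rewrite mxE; field.
have PE : qform P g u = p * g (u ord0) (u ord0)
    + \sum_k P ord0 (lift ord0 k) * g (u ord0) (u' k)
    + \sum_k P (lift ord0 k) ord0 * g (u' k) (u ord0)
    + \sum_i \sum_k P (lift ord0 i) (lift ord0 k) * g (u' i) (u' k).
  rewrite /qform big_ord_recl big_ord_recl /=.
  under [X in _ + X = _]eq_bigr do rewrite big_ord_recl.
  by rewrite big_split /=; ring.
rewrite PE schurE (bilDD gB) !(bilZl gB) !(bilZr gB) u0z zz bE.
by field.
Qed.

Hypothesis P_pd : posdef P.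

Lemma posdef_corner : 0 < p.
Proof.
pose x : 'cV[R]_n.+1 := \col_i (i == ord0)%:R.
have x_neq0 : x != 0.
  by apply/eqP => /matrixP /(_ ord0 ord0); rewrite !mxE eqxx => /eqP; rewrite oner_eq0.
have := P_pd x_neq0; rewrite mx_quadE /qform /scalar_form big_ord_recl big_ord_recl.
rewrite big1 => [|k _]; last by rewrite !mxE eq_sym (negbTE (neq_lift _ _)) !mulr0.
rewrite big1 => [|i _]; last first.
  by apply: big1 => k _; rewrite !mxE eq_sym (negbTE (neq_lift _ _)) mul0r mulr0.
by rewrite !mxE eqxx !addr0 !mulr1.
Qed.

Lemma posdef_schur : posdef schur.
Proof.
move=> y y_neq0; have p_neq0 : p != 0 by rewrite gt_eqF ?posdef_corner.
(* The first coordinate is chosen to make the completed square vanish. *)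
pose x : 'cV[R]_n.+1 := \col_i (if unlift ord0 i is Some k then y k 0
  else - p^-1 * \sum_k b k * y k 0).
have x_lift : (fun k => (x (lift ord0 k) 0 : R^o)) = (fun k => y k 0).
  by apply: funext => k; rewrite mxE liftK.
have x_neq0 : x != 0.
  apply: contraNneq y_neq0 => x0; apply/eqP/matrixP => k j.
  by rewrite (ord1 j) -[y k 0](congr1 (fun f => f k) x_lift) /= x0 !mxE.
have := P_pd x_neq0; rewrite mx_quadE (qform_schur _ scalar_form_sym_bilinear) //.
rewrite x_lift -mx_quadE; suff -> : (x ord0 0 : R^o) +
    p^-1 *: \sum_k b k *: (x (lift ord0 k) 0 : R^o) = 0.
  by rewrite /scalar_form !mulr0 add0r.
under eq_bigr do rewrite mxE liftK.
by rewrite mxE unlift_none /GRing.scale /= mulNr addNr.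
Qed.

End Schur.

Lemma qform_coercive n (P : 'M[R]_n) : posdef P -> exists2 lam, 0 < lam &
  forall (W : lmodType R) (g : W -> W -> R), sym_bilinear g -> psd_form g ->
  forall u : 'I_n -> W, lam * sum_form g u u <= qform P g u.
Proof.
elim: n P => [|n IH] P P_pd.
  by exists 1 => // W g gB gP u; rewrite /qform /sum_form !big_ord0 mulr0.
set p := P ord0 ord0; have p_gt0 : 0 < p := posdef_corner P_pd.
have [lam' lam'_gt0 Hlam'] := IH _ (posdef_schur P_pd).
have [K [K_ge0 HK]] := lincomb_form_le (schur_vec P).
pose c := 2 * p^-2 * K.
have c_ge0 : 0 <= c by rewrite /c !mulr_ge0 ?invr_ge0 ?exprn_ge0 // ltW.
exists (Num.min (p / 2) (lam' / (1 + c))) => [|W g gB gP u].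
  by rewrite lt_min !divr_gt0 //; lra.
set lam := Num.min _ _.
have lam_p : lam <= p / 2 by rewrite ge_min lexx.
have lam_c : lam * (1 + c) <= lam' by rewrite -ler_pdivlMr ?ge_min ?lexx ?orbT //; lra.
have lam_ge0 : 0 <= lam by rewrite le_min !divr_ge0 ?ltW //; lra.
set u' := fun k => u (lift ord0 k); set z := \sum_k schur_vec P k *: u' k.
set w := u ord0 + p^-1 *: z.
rewrite (qform_schur _ gB) ?gt_eqF // -/p -/z -/w /sum_form big_ord_recl /= -/(sum_form g u' u').
have u0_le : g (u ord0) (u ord0) <= 2 * g w w + c * sum_form g u' u'.
  have := bilDD_le gB gP w (- (p^-1 *: z)); rewrite /w addrK (bilNl gB) (bilNr gB).
  rewrite (bilZl gB) (bilZr gB) opprK mulrA -expr2 exprVn.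
  have pinv2_ge0 : 0 <= p^-1 ^+ 2 by rewrite exprn_ge0 // invr_ge0 ltW.
  have := ler_wpM2l pinv2_ge0 (HK W g gB gP u').
  by rewrite /c exprVn; lra.
have := Hlam' W g gB gP u'; have := gP w; have := sum_form_ge0 u' gP.
have := ler_wpM2l lam_ge0 u0_le; nra.
Qed.

End TensorForms.

Section ProductForm.
Variables (R : realType) (n : nat) (W : lmodType R) (g : W -> W -> R).
Hypotheses (gB : sym_bilinear g) (gP : psd_form g).
Local Notation G := (@sum_form R n W g).

Lemma sum_form_sym_bilinear : sym_bilinear G.
Proof.
split=> [u v | a u w v]; first by apply: eq_bigr => i _; rewrite (bilC gB).
rewrite /sum_form mulr_sumr -big_split; apply: eq_bigr => i _ /=.
by case: gB => _ ->.
Qed.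

Lemma sum_form_psd : psd_form G.
Proof. by move=> u; apply: sum_form_ge0. Qed.

Lemma form_le_sum_form u i : g (u i) (u i) <= G u u.
Proof. by rewrite /sum_form (bigD1 i) //= lerDl sumr_ge0. Qed.

Lemma bnorm_le_sum_form u i : bnorm g (u i) <= bnorm G u.
Proof. by rewrite ler_sqrt ?form_le_sum_form ?sum_form_psd. Qed.

Lemma sum_form_definite : (forall x, g x x = 0 -> x = 0) ->
  forall u, G u u = 0 -> u = 0.
Proof.
move=> g_def u /eqP; rewrite psumr_eq0 => [/allP u0 | i _]; last exact: gP.
by apply: funext => i; apply/g_def/eqP; move: (u0 i (mem_index_enum i)).
Qed.

Lemma sum_form_complete : bil_complete g -> bil_complete G.
Proof.
move=> g_complete un un_cauchy.
have comp_lim i : exists vi, bil_cvg_to g (fun k => un k i) vi.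
  apply: g_complete => e /un_cauchy [N HN]; exists N => k l Nk Nl.
  exact: le_lt_trans (bnorm_le_sum_form (un k - un l) i) (HN k l Nk Nl).
have [v un_v] := choice comp_lim; exists v => e e_gt0.
pose c := e ^+ 2 / (n%:R + 1).
have n1_gt0 : 0 < n%:R + 1 :> R by rewrite ltr_pwDr ?ler0n.
have c_gt0 : 0 < c by rewrite divr_gt0 ?exprn_gt0.
have sqrt_c_gt0 : 0 < Num.sqrt c by rewrite sqrtr_gt0.
have [N HN] := choice (fun i => un_v i _ sqrt_c_gt0).
exists (\max_i N i) => k Nk; apply: (bnorm_lt sum_form_psd) => //.
have comp_le i : g (un k i - v i) (un k i - v i) <= c.
  have := HN i k (leq_trans (leq_bigmax i) Nk).
  rewrite -(ltr_pXn2r (_ : 0 < 2)%N) ?nnegrE ?bnorm_ge0 ?sqrtr_ge0 //.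
  by rewrite (sqr_bnorm gP) sqr_sqrtr; [exact: ltW | exact: ltW].
apply: le_lt_trans (ler_sum _ (fun i _ => comp_le i)) _.
rewrite sumr_const card_ord -mulr_natl.
have cE : c * (n%:R + 1) = e ^+ 2 by rewrite /c divfK ?gt_eqF.
by have := exprn_gt0 2 e_gt0; lra.
Qed.

End ProductForm.

Section MatrixAction.
Variables (R : realType) (n : nat) (W : lmodType R).

Lemma mxact_linear (P : 'M[R]_n) a (u w : 'I_n -> W) :
  mxact P (a *: u + w) = a *: mxact P u + mxact P w.
Proof.
apply: funext => i.
change (\sum_k P i k *: (a *: u k + w k) =
  a *: (\sum_k P i k *: u k) + \sum_k P i k *: w k).
rewrite scaler_sumr -big_split /=.
by apply: eq_bigr => k _; rewrite scalerDr !scalerA mulrC.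
Qed.

Lemma mxactK (P : 'M[R]_n) (v : 'I_n -> W) : P \in unitmx ->
  mxact P (mxact (invmx P) v) = v.
Proof.
move=> P_unit; apply: funext => i; rewrite /mxact.
under eq_bigr do rewrite scaler_sumr.
rewrite exchange_big /= (eq_bigr (fun l => (P *m invmx P) i l *: v l)) => [|l _]; last first.
  by rewrite mxE scaler_suml; apply: eq_bigr => k _; rewrite scalerA.
rewrite mulmxV // (bigD1 i) //= big1 => [|l li]; first by rewrite mxE eqxx scale1r addr0.
by rewrite mxE eq_sym (negbTE li) scale0r.
Qed.

End MatrixAction.

Section WeakForm.
Variables (R : realType) (s : nat) (A : 'M[R]_s).
Variables (V : lmodType R) (l2 h1 : V -> V -> R) (ht : R) (mu : nat).
Hypotheses (l2B : sym_bilinear l2) (h1B : sym_bilinear h1).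
Hypotheses (l2_pos : forall u, u != 0 -> 0 < l2 u u) (h1P : psd_form h1).
Hypothesis ht_gt0 : 0 < ht.

Definition h1_scaled (x y : V) := ht ^+ mu * h1 x y.
Definition V_form (x y : V) := l2 x y + h1_scaled x y.

Local Notation N := (bnorm (@sum_form R s V V_form)).

Lemma l2_psd : psd_form l2.
Proof.
move=> x; have [-> | x_neq0] := eqVneq x 0; first by rewrite (bil0l l2B).
exact/ltW/l2_pos.
Qed.

Lemma h1_scaled_sym_bilinear : sym_bilinear h1_scaled.
Proof.
split=> [u v | a u w v]; rewrite /h1_scaled; first by rewrite (bilC h1B).
by case: h1B => _ ->; ring.
Qed.

Lemma h1_scaled_psd : psd_form h1_scaled.
Proof. by move=> x; rewrite mulr_ge0 // exprn_ge0 // ltW. Qed.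

Lemma V_form_sym_bilinear : sym_bilinear V_form.
Proof.
split=> [u v | a u w v]; rewrite /V_form.
  by rewrite (bilC l2B) (bilC h1_scaled_sym_bilinear).
by case: l2B => _ ->; case: h1_scaled_sym_bilinear => _ ->; ring.
Qed.

Lemma V_form_psd : psd_form V_form.
Proof. by move=> x; rewrite addr_ge0 ?l2_psd ?h1_scaled_psd. Qed.

Lemma V_form_definite x : V_form x x = 0 -> x = 0.
Proof.
move=> Vx0; apply/eqP; apply: contraT => /l2_pos; have := h1_scaled_psd x.
by move: Vx0; rewrite /V_form; lra.
Qed.

Lemma VSnormE u : VSnorm l2 h1 ht mu u = N u.
Proof.
rewrite /VSnorm /bnorm /sum_form; congr Num.sqrt; apply: eq_bigr => i _.
exact/sqr_bnorm/V_form_psd.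
Qed.

Lemma l2_le_V_form u i : bnorm l2 (u i) <= N u.
Proof.
apply: le_trans (bnorm_le_sum_form V_form_psd u i).
by rewrite ler_sqrt ?V_form_psd // /V_form lerDl h1_scaled_psd.
Qed.

Lemma h1_scaled_le_V_form u i : bnorm h1_scaled (u i) <= N u.
Proof.
apply: le_trans (bnorm_le_sum_form V_form_psd u i).
by rewrite ler_sqrt ?V_form_psd // /V_form lerDr l2_psd.
Qed.

Local Notation a := (opA A l2 h1 ht mu).

Lemma opAE u v :
  a u v = sum_form l2 u v + \sum_i \sum_j A i j * h1_scaled (u j) (v i).
Proof.
rewrite /opA mulr_sumr; congr (_ + _); apply: eq_bigr => i _.
by rewrite mulr_sumr; apply: eq_bigr => j _; rewrite /h1_scaled; ring.
Qed.

Lemma opA_linear_l c u w v : a (c *: u + w) v = c * a u v + a w v.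
Proof.
rewrite !opAE; case: (sum_form_sym_bilinear s l2B) => _ ->.
rewrite mulrDr addrACA; congr (_ + _); rewrite mulr_sumr -big_split.
apply: eq_bigr => i _; rewrite mulr_sumr -big_split; apply: eq_bigr => j _ /=.
by case: h1_scaled_sym_bilinear => _ ->; ring.
Qed.

Lemma opA_linear_r u : linear_form (a u).
Proof.
move=> c v w; rewrite !opAE (bilC (sum_form_sym_bilinear s l2B)).
case: (sum_form_sym_bilinear s l2B) => _ ->; rewrite !(bilC (sum_form_sym_bilinear s l2B) _ u).
rewrite mulrDr addrACA; congr (_ + _); rewrite mulr_sumr -big_split.
apply: eq_bigr => i _; rewrite mulr_sumr -big_split; apply: eq_bigr => j _ /=.
by rewrite (bilDr h1_scaled_sym_bilinear) (bilZr h1_scaled_sym_bilinear); ring.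
Qed.

Definition opA_bound := s%:R + \sum_i \sum_j `|A i j|.

Lemma opA_bounded u v : `|a u v| <= opA_bound * N u * N v.
Proof.
have Nu := bnorm_ge0 (sum_form V_form) u; have Nv := bnorm_ge0 (sum_form V_form) v.
have mul_le (g : V -> V -> R) (gB : sym_bilinear g) (gP : psd_form g) :
    (forall w i, bnorm g (w i) <= N w) -> forall i j, `|g (u j) (v i)| <= N u * N v.
  move=> gN i j; apply: le_trans (normr_bil_le gB gP _ _) _.
  by rewrite ler_pM ?bnorm_ge0.
rewrite opAE /opA_bound mulrDl mulrDl; apply: le_trans (ler_normD _ _) _; apply: lerD.
  apply: le_trans (ler_norm_sum _ _ _) _.
  apply: le_trans (_ : _ <= \sum_(i < s) N u * N v) _.
    by apply: ler_sum => i _; apply: (mul_le _ l2B l2_psd l2_le_V_form).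
  by rewrite sumr_const card_ord -mulrA mulr_natl.
apply: le_trans (ler_norm_sum _ _ _) _; rewrite -mulrA mulr_suml; apply: ler_sum => i _.
apply: le_trans (ler_norm_sum _ _ _) _; rewrite mulr_suml; apply: ler_sum => j _.
rewrite normrM ler_wpM2l //.
exact: (mul_le _ h1_scaled_sym_bilinear h1_scaled_psd h1_scaled_le_V_form).
Qed.

Lemma opA_mxact (C : 'M[R]_s) u : C^T = C ->
  a u (mxact C u) = qform C l2 u + qform (C *m A) h1_scaled u.
Proof.
move=> C_sym; have CC i k : C i k = C k i by rewrite -[C in LHS]C_sym mxE.
rewrite opAE /qform /mxact; congr (_ + _).
  apply: eq_bigr => i _; rewrite (bil_sumr l2B); apply: eq_bigr => k _.
  by rewrite (bilZr l2B).
rewrite (eq_bigr (fun i => \sum_j \sum_k A i j * C i k * h1_scaled (u j) (u k))); last first.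
  move=> i _; apply: eq_bigr => j _; rewrite (bil_sumr h1_scaled_sym_bilinear) mulr_sumr.
  by apply: eq_bigr => k _; rewrite (bilZr h1_scaled_sym_bilinear); ring.
rewrite exchange_big [RHS]exchange_big /=; apply: eq_bigr => j _.
rewrite exchange_big /=; apply: eq_bigr => k _.
rewrite mxE mulr_suml (bilC h1_scaled_sym_bilinear).
by apply: eq_bigr => i _; rewrite CC; ring.
Qed.

End WeakForm.

Section Isomorphism.
Variables (R : realType) (s : nat) (A C : 'M[R]_s) (lamC lamCA cC : R).
Hypotheses (C_sym : C^T = C) (C_unit : C \in unitmx).
Hypotheses (lamC_gt0 : 0 < lamC) (lamCA_gt0 : 0 < lamCA) (cC_ge0 : 0 <= cC).
Hypothesis C_coercive : forall (W : lmodType R) (g : W -> W -> R),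
  sym_bilinear g -> psd_form g -> forall u : 'I_s -> W, lamC * sum_form g u u <= qform C g u.
Hypothesis CA_coercive : forall (W : lmodType R) (g : W -> W -> R),
  sym_bilinear g -> psd_form g ->
  forall u : 'I_s -> W, lamCA * sum_form g u u <= qform (C *m A) g u.
Hypothesis C_bounded : forall (W : lmodType R) (g : W -> W -> R),
  sym_bilinear g -> psd_form g ->
  forall u : 'I_s -> W, sum_form g (mxact C u) (mxact C u) <= cC * sum_form g u u.

Variables (V : lmodType R) (l2 h1 : V -> V -> R) (ht : R) (mu : nat).
Hypotheses (HS : hilbert_setting l2 h1 ht mu) (ht_gt0 : 0 < ht).

Let l2B : sym_bilinear l2. Proof. by case: HS. Qed.
Let h1B : sym_bilinear h1. Proof. by case: HS. Qed.
Let l2_pos : forall u, u != 0 -> 0 < l2 u u. Proof. by case: HS. Qed.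
Let h1P : psd_form h1. Proof. by case: HS. Qed.
Let V_complete : bil_complete (V_form l2 h1 ht mu). Proof. by case: HS. Qed.

Local Notation G := (@sum_form R s V (V_form l2 h1 ht mu)).
Local Notation N := (bnorm G).
Local Notation a := (opA A l2 h1 ht mu).
Local Notation lam := (Num.min lamC lamCA).

Let l2P : psd_form l2 := l2_psd l2B l2_pos.
Let hB : sym_bilinear (h1_scaled h1 ht mu) := h1_scaled_sym_bilinear ht mu h1B.
Let hP : psd_form (h1_scaled h1 ht mu) := h1_scaled_psd mu h1P ht_gt0.
Let VB : sym_bilinear (V_form l2 h1 ht mu) := V_form_sym_bilinear ht mu l2B h1B.
Let VP : psd_form (V_form l2 h1 ht mu) := V_form_psd mu l2B l2_pos h1P ht_gt0.
Let GB : sym_bilinear G := sum_form_sym_bilinear s VB.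
Let GP : psd_form G := sum_form_psd VP.

Lemma opA_mxact_coercive u : lam * G u u <= a u (mxact C u).
Proof.
rewrite (opA_mxact A ht mu l2B h1B u C_sym) /sum_form /V_form big_split mulrDr /=.
have lam_lamC : lam <= lamC by rewrite ge_min lexx.
have lam_lamCA : lam <= lamCA by rewrite ge_min lexx orbT.
apply: lerD.
  exact: le_trans (ler_wpM2r (sum_form_ge0 u l2P) lam_lamC) (C_coercive l2B l2P u).
exact: le_trans (ler_wpM2r (sum_form_ge0 u hP) lam_lamCA) (CA_coercive hB hP u).
Qed.

Lemma mxact_bnorm_le w : N (mxact C w) <= Num.sqrt cC * N w.
Proof.
rewrite /bnorm -sqrtrM // ler_sqrt; first exact: C_bounded VB VP w.
exact: mulr_ge0 cC_ge0 (GP w).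
Qed.

Lemma opA_inverse_bounded u M : 0 <= M ->
  (forall v, `|a u v| <= M * N v) -> N u <= Num.sqrt cC / lam * M.
Proof.
move=> M_ge0 aM; have lam_gt0 : 0 < lam by rewrite lt_min lamC_gt0.
have key : lam * N u ^+ 2 <= Num.sqrt cC * M * N u.
  rewrite (sqr_bnorm GP); apply: le_trans (opA_mxact_coercive u) _.
  apply: le_trans (ler_norm _) (le_trans (aM _) _).
  by rewrite [_ * M]mulrC -mulrA ler_wpM2l ?mxact_bnorm_le.
rewrite mulrAC ler_pdivlMr //; have [-> | Nu_neq0] := eqVneq (N u) 0.
  by rewrite mul0r mulr_ge0 ?sqrtr_ge0.
have Nu_gt0 : 0 < N u by rewrite lt_def Nu_neq0 bnorm_ge0.
by rewrite -(ler_pM2r Nu_gt0); rewrite expr2 in key; lra.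
Qed.

Lemma opA_injective u : (forall v, a u v = 0) -> u = (fun _ => 0).
Proof.
move=> au0; apply: sum_form_definite VP (V_form_definite l2_pos h1P ht_gt0) _ _.
rewrite -(sqr_bnorm GP); apply/eqP; rewrite sqrf_eq0 eq_le bnorm_ge0 andbT.
by rewrite -(mulr0 (Num.sqrt cC / lam)) opA_inverse_bounded // => v; rewrite au0 normr0 mul0r.
Qed.

Lemma opA_surjective (f : ('I_s -> V) -> R) (K : R) : linear_form f ->
  (forall v, `|f v| <= K * N v) -> exists u, forall v, a u v = f v.
Proof.
move=> fL fK; have lam_gt0 : 0 < lam by rewrite lt_min lamC_gt0.
have G_definite : forall u, G u u = 0 -> u = 0 :=
  sum_form_definite VP (V_form_definite l2_pos h1P ht_gt0).
pose b u w := a u (mxact C w).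
have bL c u w v : b (c *: u + w) v = c * b u v + b w v by apply: opA_linear_l.
have bR u : linear_form (b u).
  by move=> c v w; rewrite /b mxact_linear; apply: opA_linear_r.
have b_bounded u w : `|b u w| <= opA_bound A * Num.sqrt cC * N u * N w.
  apply: le_trans (opA_bounded A mu l2B h1B l2_pos h1P ht_gt0 u _) _.
  have bound_ge0 : 0 <= opA_bound A.
    by rewrite addr_ge0 ?ler0n ?sumr_ge0 // => i _; rewrite sumr_ge0.
  by rewrite -!mulrA ler_wpM2l // mulrCA ler_wpM2l ?bnorm_ge0 ?mxact_bnorm_le.
have fCL : linear_form (fun w => f (mxact C w)).
  by move=> c v w; rewrite /= mxact_linear fL.
have fC_bounded w : `|f (mxact C w)| <= `|K| * Num.sqrt cC * N w.
  apply: le_trans (fK _) _; rewrite -mulrA.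
  apply: le_trans (ler_wpM2r (bnorm_ge0 _ _) (ler_norm K)) _.
  by rewrite ler_wpM2l ?mxact_bnorm_le.
have [u Hu] := lax_milgram GB GP (sum_form_complete VP V_complete) G_definite
  bL bR b_bounded lam_gt0 opA_mxact_coercive fCL fC_bounded.
by exists u => v; have := Hu (mxact (invmx C) v); rewrite /b mxactK.
Qed.

End Isomorphism.

Unset Implicit Arguments.

Theorem theorem3p1 (R : realType) (s : nat) (A : 'M[R]_s) :
  weakly_pos_def A ->
  exists c1 c2 : R,
    forall (mu : nat) (ht : R), (mu = 1%N \/ mu = 2%N) -> 0 < ht ->
    forall (V : lmodType R) (l2 h1 : V -> V -> R),
      hilbert_setting l2 h1 ht mu ->
      let nrm := VSnorm l2 h1 ht mu in
      let a := opA A l2 h1 ht mu in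
      (* ||A||_{L(V,V dual)} <= c1 *)
      (forall u v : 'I_s -> V, `|a u v| <= c1 * nrm u * nrm v) /\
      (forall f : ('I_s -> V) -> R, in_dual l2 h1 ht mu f ->
         exists u : 'I_s -> V, forall v, a u v = f v) /\
      (forall u : 'I_s -> V, (forall v, a u v = 0) -> u = (fun _ => 0)) /\
      (* ||A^{-1}||_{L(V dual,V)} <= c2, i.e. ||u||_V <= c2 ||A u||_{V dual} *)
      (forall (u : 'I_s -> V) (M : R), 0 <= M ->
         (forall v, `|a u v| <= M * nrm v) -> nrm u <= c2 * M).
Proof.
move=> [C [C_sym [C_pd CA_pd]]].
have [lamC lamC_gt0 C_coercive] := qform_coercive C_pd.
have [lamCA lamCA_gt0 CA_coercive] := qform_coercive CA_pd.
have [cC cC_ge0 C_bounded] := mxact_form_le C.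
exists (opA_bound A), (Num.sqrt cC / Num.min lamC lamCA).
(* The bounds hold for every exponent mu, not only for mu = 1, 2. *)
move=> mu ht _ ht_gt0 V l2 h1 HS nrm a; case: (HS) => l2B _ l2_pos h1P _.
have nrmE := VSnormE mu l2B l2_pos h1P ht_gt0.
split; [|split; [|split]].
- by move=> u v; rewrite /nrm !nrmE; apply: opA_bounded; case: HS.
- move=> f [fL [K fK]].
  apply: (opA_surjective C_sym (posdef_unitmx C_pd) lamC_gt0 lamCA_gt0 cC_ge0
    C_coercive CA_coercive C_bounded HS ht_gt0 fL (K := K)) => v.
  by rewrite -nrmE.
- exact: (opA_injective C_sym lamC_gt0 lamCA_gt0 cC_ge0
    C_coercive CA_coercive C_bounded HS ht_gt0).
- move=> u M M_ge0 aM; rewrite /nrm nrmE.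
  apply: (opA_inverse_bounded C_sym lamC_gt0 lamCA_gt0 cC_ge0
    C_coercive CA_coercive C_bounded HS ht_gt0 M_ge0) => v.
  by rewrite -nrmE.
Qed.
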